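(* Let $u$ be a stable sorted configuration on $K_{m,n}$ with $r$-vector $(r_1,\dots,r_n)$. Let $h$ be the smallest index $1\le h\le n$ with $r_h=\max\{r_1,\dots,r_n\}$, and let $k:=u_{b_h}-r_h+2$ (so $k=1+\#\{j\le m-1: u_{a_j}+1\le h-1\}$; one has $1\le k\le m-1$ when $m\ge 2$). Define $$u':=u+(r_h-2)\Delta^{(a_m)}-\sum_{s=k}^{m-1}\Delta^{(a_s)}-\sum_{t=h}^{n}\Delta^{(b_t)}.$$ Then $u'=\mathrm{park}(u)$. Explicitly, $u'_{b_i}=u_{b_i}-u_{b_h}+m\,\chi(i\le h-1)$ for $1\le i\le n$, $u'_{a_j}=u_{a_j}-(h-1)+n\,\chi(j\le k-1)$ for $1\le j\le m-1$, and $u'_{a_m}=\mathrm{degree}(u)-\sum_i u'_{b_i}-\sum_{j\le m-1}u'_{a_j}$; moreover the sorted version of $u'$ has $a$-values $(u'_{a_k},\dots,u'_{a_{m-1}},u'_{a_1},\dots,u'_{a_{k-1}})$ and $b$-values $(u'_{b_h},\dots,u'_{b_n},u'_{b_1},\dots,u'_{b_{h-1}})$ (with the same sink value).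
   Context: Let $m,n\ge 1$. $K_{m,n}$ is the complete bipartite graph with vertex set $V=A_m\sqcup B_n$, $A_m=\{a_1,\dots,a_m\}$, $B_n=\{b_1,\dots,b_n\}$, with exactly one edge $\{a_i,b_j\}$ for every $i,j$; $a_m$ is the sink. A configuration is a function $u:V\to\mathbb Z$; $\mathrm{degree}(u)=\sum_c u_c$. For $c\in V$ with graph degree $d_c$ ($d_{a_i}=n$, $d_{b_j}=m$), $\Delta^{(c)}=d_c e_c-\sum_{c'\text{ adjacent to }c}e_{c'}$, with $e_c$ the indicator configuration of $c$; $\Delta^{(C)}=\sum_{c\in C}\Delta^{(c)}$. A configuration $u$ is parking if $u_c\ge0$ for all $c\neq a_m$ and for every non-empty $C\subseteq V\setminus\{a_m\}$, $u-\Delta^{(C)}$ has a negative value at some vertex other than $a_m$; every configuration is toppling equivalent (difference in the integer span of the $\Delta^{(c)}$) to a unique parking configuration $\mathrm{park}(u)$. $u$ is stable if $0\le u_{a_j}\le n-1$ for $1\le j\le m-1$ and $0\le u_{b_i}\le m-1$ for all $i$; sorted if $u_{a_1}\le\dots\le u_{a_{m-1}}$ and $u_{b_1}\le\dots\le u_{b_n}$ (no condition at the sink). The $r$-vector of a stable sorted $u$ is $(r_1,\dots,r_n)$ with $r_i=u_{b_i}+1-\#\{j\in\{1,\dots,m-1\}: u_{a_j}+1\le i-1\}$. $\chi(\mathcal P)$ is $1$ if $\mathcal P$ holds and $0$ otherwise. *)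

From HB Require Import structures.
From mathcomp Require Import all_boot all_order all_algebra.
Set Implicit Arguments. Unset Strict Implicit. Unset Printing Implicit Defensive.
Import Order.TTheory GRing.Theory Num.Theory.
Local Open Scope ring_scope.

(* Vertices: inl j  stands for a_{j+1} (j : 'I_m),  inr i  stands for b_{i+1}. *)
Definition V (m n : nat) := ('I_m + 'I_n)%type.
Definition config (m n : nat) := V m n -> int.

Definition is_sink m n (c : V m n) : bool :=
  if c is inl j then (j : nat) == m.-1 else false.

Definition vdeg m n (c : V m n) : int := if c is inl _ then n%:Z else m%:Z.

Definition adj m n (c d : V m n) : bool :=
  match c, d with inl _, inr _ | inr _, inl _ => true | _, _ => false end.

Definition lap m n (c : V m n) : config m n :=
  fun x => if x == c then vdeg c else if adj c x then -1 else 0.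

Definition lapC m n (P : pred (V m n)) : config m n :=
  fun x => \sum_(c | P c) lap c x.

Definition degree m n (u : config m n) : int := \sum_c u c.

Definition toppling_equiv m n (u v : config m n) : Prop :=
  exists z : V m n -> int, forall x, v x = u x + \sum_c z c * lap c x.

Definition is_parking m n (u : config m n) : Prop :=
  (forall c, ~~ is_sink c -> 0 <= u c) /\
  (forall C : {set V m n}, C != set0 -> (forall c, c \in C -> ~~ is_sink c) ->
     exists c, ~~ is_sink c /\ u c - lapC (mem C) c < 0).

Definition stable m n (u : config m n) : Prop :=
  (forall j : 'I_m, ~~ @is_sink m n (inl j) -> 0 <= u (inl j) <= n%:Z - 1) /\
  (forall i : 'I_n, 0 <= u (inr i) <= m%:Z - 1).

Definition sorted_config m n (u : config m n) : Prop :=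
  (forall j1 j2 : 'I_m, ~~ @is_sink m n (inl j1) -> ~~ @is_sink m n (inl j2) ->
      (j1 <= j2)%N -> u (inl j1) <= u (inl j2)) /\
  (forall i1 i2 : 'I_n, (i1 <= i2)%N -> u (inr i1) <= u (inr i2)).

Definition cnt_a m n (u : config m n) (t : int) : nat :=
  #|[set j : 'I_m | ~~ @is_sink m n (inl j) & u (inl j) + 1 <= t]|.

(* r-vector, 0-based: rvec u i = r_{i+1} = u_{b_{i+1}} + 1 - #{j<=m-1 : u_{a_j}+1 <= i} *)
Definition rvec m n (u : config m n) (i : 'I_n) : int :=
  u (inr i) + 1 - (cnt_a u (i : nat)%:Z)%:Z.

(* u' := u + (r_h - 2) Delta^{(a_m)} - sum_{s=k}^{m-1} Delta^{(a_s)} - sum_{t=h}^{n} Delta^{(b_t)},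
   with h = h0 + 1 *)
Definition park_cand m n (u : config m n) (h0 : 'I_n) (k : int) : config m n :=
  fun x => u x + (rvec u h0 - 2) * lapC (@is_sink m n) x
           - lapC (fun c => if c is inl j then (k <= (j : nat)%:Z + 1) && ((j : nat)%:Z + 1 <= m%:Z - 1)
                            else false) x
           - lapC (fun c => if c is inr i then (h0 <= i)%N else false) x.

From HB Require Import structures.
From mathcomp Require Import all_boot all_order all_algebra zify.
Import Order.TTheory GRing.Theory Num.Theory.
Set Implicit Arguments.
Unset Strict Implicit.
Unset Printing Implicit Defensive.

Local Open Scope ring_scope.

(* Toppling a set of non-sink vertices with a-part A and b-part B takes n - #|B| chips
   from every a_j in A and m - #|A| chips from every b_i in B, so u' is parking once no
   nonempty pair (A, B) can afford this.  The a-values of u' stay below n, so B is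
   nonempty.  Let c(t) = #{j < m : u_{a_j} + 1 <= t} and let i be the least index of B
   (resp. of the part of B at or beyond h).  If B lies below h, each a_j in A has
   i < u_{a_j} + 1 <= h, so #|A| <= c(h) - c(i) < u_{b_h} - u_{b_i} <= #|A|, by the
   strict maximality of r_h over r_i.  Otherwise no a_j in A has h < u_{a_j} + 1 <= i,
   while r_i <= r_h gives m - #|A| <= c(i) - c(h): together more than the m - 1 non-sink
   a-vertices. *)

Lemma count_itv_iota (a b N : nat) :
  count (fun x => a <= x < b)%N (iota 0 N) = (minn b N - a)%N.
Proof.
elim: N => [|N IH]; first by rewrite minn0.
by rewrite -addn1 iotaD count_cat IH /= add0n addn0; case: (leqP a N); case: (ltnP N b); lia.
Qed.

Lemma card_ord_itv (N a b : nat) : #|[pred x : 'I_N | a <= x < b]%N| = (minn b N - a)%N.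
Proof.
rewrite -count_itv_iota -val_enum_ord count_map cardE -size_filter /enum_mem.
by rewrite -filter_predI; congr size; apply: eq_filter => x; rewrite /= andbT.
Qed.

Lemma card_ord_geq (N h : nat) : #|[pred i : 'I_N | h <= i]%N| = (N - h)%N.
Proof.
have := card_ord_itv N h N; rewrite minnn => <-; apply: eq_card => i.
by rewrite !inE /= ltn_ord andbT.
Qed.

Lemma mem_downclosed_ord N (S : {set 'I_N}) :
  (forall i j : 'I_N, (i <= j)%N -> j \in S -> i \in S) ->
  forall j : 'I_N, (j \in S) = (j < #|S|)%N.
Proof.
move=> down j; apply/idP/idP => [jS | ltjS].
  have sub : [pred x : 'I_N | 0 <= x < j.+1]%N \subset S.
    by apply/subsetP => x /andP[_ xj]; apply: down jS.
  by have := subset_leq_card sub; rewrite card_ord_itv subn0 (minn_idPl (ltn_ord j)).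
apply: contraLR ltjS; rewrite -leqNgt => jNS.
have sub : S \subset [pred x : 'I_N | 0 <= x < j]%N.
  apply/subsetP => x xS; rewrite inE /=; case: ltnP => // jx.
  by case/negP: jNS; apply: down jx xS.
by have := subset_leq_card sub; rewrite card_ord_itv subn0 (minn_idPl (ltnW (ltn_ord j))).
Qed.

Lemma exists_mem_card_room N (X : {set 'I_N}) (hi : nat) :
  X != set0 -> (forall x, x \in X -> (x < hi)%N) -> exists2 x, x \in X & (x + #|X| <= hi)%N.
Proof.
case/set0Pn=> x0 x0X Xlt.
case: (arg_minnP (fun y : 'I_N => y : nat) x0X) => x xX xmin; exists x => //.
have sub : X \subset [pred y : 'I_N | x <= y < hi]%N.
  by apply/subsetP => y yX; rewrite inE /= xmin // Xlt.
by have := subset_leq_card sub; rewrite card_ord_itv; have := Xlt x xX; lia.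
Qed.

Lemma pairwise_filter_enum_ord N (P : pred 'I_N) (r : rel 'I_N) :
  (forall i j, P i -> P j -> (i < j)%N -> r i j) -> pairwise r [seq x <- enum 'I_N | P x].
Proof.
move=> r_lt; have lt_enum : pairwise (relpre val ltn) (enum 'I_N).
  rewrite -pairwise_map val_enum_ord -sorted_pairwise; last exact: ltn_trans.
  exact: iota_ltn_sorted.
apply: (sub_in_pairwise (P := P) (r := relpre val ltn)); last exact: pairwise_filter.
  by move=> i j Pi Pj; apply: r_lt.
by apply/allP => x; rewrite mem_filter => /andP[].
Qed.

Lemma sorted_cat_filter_enum_ord d (T : porderType d) N (f : 'I_N -> T) (P Q : pred 'I_N) :
  (forall i j, P i -> P j -> (i < j)%N -> (f i <= f j)%O) ->
  (forall i j, Q i -> Q j -> (i < j)%N -> (f i <= f j)%O) ->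
  (forall i j, P i -> Q j -> (f i <= f j)%O) ->
  sorted <=%O ([seq f i | i <- enum 'I_N & P i] ++ [seq f i | i <- enum 'I_N & Q i]).
Proof.
move=> f_P f_Q f_PQ; rewrite sorted_pairwise; last exact: le_trans.
rewrite pairwise_cat !pairwise_map allrel_mapl allrel_mapr.
apply/and3P; split; [|exact: pairwise_filter_enum_ord..].
by apply/allrelP => i j; rewrite !mem_filter => /andP[Pi _] /andP[Qj _]; apply: f_PQ.
Qed.

Lemma nonsink_inlE m n (j : 'I_m) : ~~ @is_sink m n (inl j) = (j < m.-1)%N.
Proof. by rewrite /=; have := ltn_ord j; lia. Qed.

Lemma card_nonsink m n : #|[set j : 'I_m | ~~ @is_sink m n (inl j)]| = m.-1.
Proof.
rewrite (eq_card (B := [pred x : 'I_m | 0 <= x < m.-1]%N)) ?card_ord_itv; first lia.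
by move=> j; rewrite !inE nonsink_inlE.
Qed.

Lemma card_sink m n : (0 < m)%N -> #|[pred j : 'I_m | @is_sink m n (inl j)]| = 1%N.
Proof.
move=> m_gt0; rewrite (eq_card (B := [pred j : 'I_m | m.-1 <= j < m]%N)) ?card_ord_itv; first lia.
by move=> j; rewrite !inE /=; have := ltn_ord j; lia.
Qed.

Lemma lapC_inl m n (P : pred (V m n)) (j : 'I_m) :
  lapC P (inl j) = (if P (inl j) then n%:Z else 0) - #|[pred i : 'I_n | P (inr i)]|%:Z.
Proof.
rewrite /lapC big_sumType [X in _ + X = _](eq_bigr (fun=> -1)) // sumr_const mulNrn natz.
congr (_ - _); case: ifP => Pj.
  rewrite (bigD1 j) //= /lap eqxx big1 ?addr0 // => j' /andP[_ j'j] /=.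
  by case: eqP => // -[E]; rewrite E eqxx in j'j.
by rewrite big1 // => j' Pj'; rewrite /lap /=; case: eqP => // -[E]; rewrite E Pj' in Pj.
Qed.

Lemma lapC_inr m n (P : pred (V m n)) (i : 'I_n) :
  lapC P (inr i) = (if P (inr i) then m%:Z else 0) - #|[pred j : 'I_m | P (inl j)]|%:Z.
Proof.
rewrite /lapC big_sumType [X in X + _ = _](eq_bigr (fun=> -1)) // sumr_const mulNrn natz addrC.
congr (_ - _); case: ifP => Pi.
  rewrite (bigD1 i) //= /lap eqxx big1 ?addr0 // => i' /andP[_ i'i] /=.
  by case: eqP => // -[E]; rewrite E eqxx in i'i.
by rewrite big1 // => i' Pi'; rewrite /lap /=; case: eqP => // -[E]; rewrite E Pi' in Pi.
Qed.

Lemma lapC_indicator m n (P : pred (V m n)) x :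
  lapC P x = \sum_c (P c)%:Z * lap c x.
Proof. by rewrite /lapC big_mkcond; apply: eq_bigr => c _; case: (P c); rewrite ?mul1r ?mul0r. Qed.

Lemma sum_lapC m n (P : pred (V m n)) : \sum_x lapC P x = 0.
Proof.
rewrite big_sumType (eq_bigr _ (fun j _ => lapC_inl P j)).
rewrite (eq_bigr _ (fun i _ => lapC_inr P i)) !sumrB -!big_mkcond !sumr_const !card_ord /=.
set a := #|[pred j : 'I_m | P (inl j)]|; set b := #|[pred i : 'I_n | P (inr i)]|.
lia.
Qed.

Lemma toppling_equiv_lapC m n (u : config m n) (a : int) (P Q R : pred (V m n)) :
  toppling_equiv u (fun x => u x + a * lapC P x - lapC Q x - lapC R x).
Proof.
exists (fun c => a * (P c)%:Z - (Q c)%:Z - (R c)%:Z) => x.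
rewrite !lapC_indicator -!addrA mulr_sumr -!sumrN -!big_split /=; congr (_ + _).
by apply: eq_bigr => c _; rewrite !mulrBl mulrA addrA.
Qed.

Lemma sink_value m n (v : config m n) c : is_sink c ->
  v c = degree v - \sum_(i : 'I_n) v (inr i) - \sum_(j : 'I_m | ~~ @is_sink m n (inl j)) v (inl j).
Proof.
case: c => [j0|//] /= /eqP j0E.
rewrite /degree big_sumType /= (bigD1 j0) //= (eq_bigl (fun j : 'I_m => (j : nat) != m.-1)).
  by rewrite !addrK.
by move=> j; rewrite -j0E.
Qed.

Lemma is_parking_bipartite m n (v : config m n) :
  (forall c, ~~ is_sink c -> 0 <= v c) ->
  (forall (A : {set 'I_m}) (B : {set 'I_n}),
     (forall j, j \in A -> ~~ @is_sink m n (inl j)) ->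
     (forall j, j \in A -> n%:Z - #|B|%:Z <= v (inl j)) ->
     (forall i, i \in B -> m%:Z - #|A|%:Z <= v (inr i)) ->
     A = set0 /\ B = set0) ->
  is_parking v.
Proof.
move=> v_ge0 no_firing; split=> // C Cne C_nonsink.
case: (boolP [exists c, ~~ is_sink c && (v c - lapC (mem C) c < 0)]).
  by case/existsP=> c /andP[nsc neg]; exists c.
move/existsPn=> legal; exfalso.
have legal_at c : c \in C -> lapC (mem C) c <= v c.
  by move=> cC; have := legal c; rewrite C_nonsink //= -leNgt subr_ge0.
have [A0 B0] : [set j | inl j \in C] = set0 /\ [set i | inr i \in C] = set0.
  apply: no_firing => [j|j|i]; rewrite inE => cC; first exact: C_nonsink.
    by have := legal_at _ cC; rewrite lapC_inl /= cC (eq_card (in_set _)).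
  by have := legal_at _ cC; rewrite lapC_inr /= cC (eq_card (in_set _)).
case/set0Pn: Cne => -[j|i] cC.
  by rewrite -(in_set (fun j => inl j \in C)) A0 inE in cC.
by rewrite -(in_set (fun i => inr i \in C)) B0 inE in cC.
Qed.

Definition a_window m n (u : config m n) (t1 t2 : int) : {set 'I_m} :=
  [set j | ~~ @is_sink m n (inl j) & t1 < u (inl j) + 1 <= t2].

Section Counting.
Variables (m n : nat) (u : config m n).

Lemma cnt_a_window (t1 t2 : int) : t1 <= t2 ->
  cnt_a u t2 = (cnt_a u t1 + #|a_window u t1 t2|)%N.
Proof.
move=> le_t12; rewrite /cnt_a -(cardsID [set j | ~~ @is_sink m n (inl j) & u (inl j) + 1 <= t1]).
by congr addn; apply: eq_card => j; rewrite !inE; case: (is_sink _) => //=; lia.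
Qed.

Lemma cnt_a_le (t : int) : (cnt_a u t <= m.-1)%N.
Proof.
rewrite -(card_nonsink m n); apply: subset_leq_card.
by apply/subsetP => j; rewrite !inE => /andP[].
Qed.

Lemma cnt_a0 : stable u -> cnt_a u 0 = 0%N.
Proof.
move=> [stab _]; apply: eq_card0 => j; rewrite !inE.
by case: (boolP (is_sink _)) => //= nsj; have := stab j nsj; lia.
Qed.

Lemma cnt_a_sorted (t : int) : sorted_config u ->
  forall j : 'I_m, ~~ @is_sink m n (inl j) -> (u (inl j) + 1 <= t) = (j < cnt_a u t)%N.
Proof.
move=> [sorta _] j nsj; rewrite /cnt_a -mem_downclosed_ord ?inE ?nsj // => i j' ij'.
rewrite !inE => /andP[nsj' lej']; have nsi : ~~ @is_sink m n (inl i).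
  by move: nsj'; rewrite !nonsink_inlE; lia.
by rewrite nsi /=; have := sorta _ _ nsi nsj' ij'; lia.
Qed.

End Counting.

Lemma degree_park_cand m n (u : config m n) h0 k : degree (park_cand u h0 k) = degree u.
Proof.
by rewrite /degree /park_cand !sumrB big_split /= -mulr_sumr !sum_lapC mulr0 !subr0.
Qed.

Lemma park_cand_inl m n (u : config m n) (h0 : 'I_n) (k : int) (j : 'I_m) :
  ~~ @is_sink m n (inl j) ->
  park_cand u h0 k (inl j) =
    u (inl j) - h0%:Z + n%:Z * (if j%:Z + 1 <= k - 1 then 1 else 0).
Proof.
move=> nsj; rewrite /park_cand !lapC_inl (negbTE nsj) /= card_ord_geq !eq_card0 //.
by have := ltn_ord h0; move: nsj; rewrite nonsink_inlE; do 2!case: ifP; lia.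
Qed.

Section ParkCand.
Variables (m n : nat) (u : config m n) (h0 : 'I_n).
Hypothesis m_gt0 : (0 < m)%N.
(* the theorem's k = u_{b_h} - r_h + 2 *)
Local Notation k := (1 + (cnt_a u h0%:Z)%:Z).
Local Notation u' := (park_cand u h0 k).

Lemma park_cand_inr (i : 'I_n) :
  u' (inr i) = u (inr i) - u (inr h0) + m%:Z * (if (i < h0)%N then 1 else 0).
Proof.
have card_tail : #|[pred j : 'I_m | (k <= j%:Z + 1) && (j%:Z + 1 <= m%:Z - 1)]|
    = (m.-1 - cnt_a u h0%:Z)%N.
  rewrite (eq_card (B := [pred j : 'I_m | cnt_a u h0%:Z <= j < m.-1]%N)).
    by rewrite card_ord_itv; lia.
  by move=> j; rewrite !inE /=; have := ltn_ord j; lia.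
rewrite /park_cand !lapC_inr card_sink // card_tail eq_card0 //= /rvec.
by have := cnt_a_le u h0%:Z; case: ifP; case: ltnP; lia.
Qed.

Hypotheses (u_stable : stable u) (u_sorted : sorted_config u).

Lemma park_cand_inl_threshold (j : 'I_m) : ~~ @is_sink m n (inl j) ->
  u' (inl j) = u (inl j) - h0%:Z + (if u (inl j) + 1 <= h0%:Z then n%:Z else 0).
Proof.
move=> nsj; rewrite park_cand_inl // (cnt_a_sorted _ u_sorted nsj).
by case: ltnP; case: ifP; lia.
Qed.

Lemma park_cand_inl_bounds (j : 'I_m) : ~~ @is_sink m n (inl j) -> 0 <= u' (inl j) <= n%:Z - 1.
Proof.
move=> nsj; rewrite park_cand_inl_threshold //.
by have := u_stable.1 j nsj; have := ltn_ord h0; case: ifP; lia.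
Qed.

Lemma park_cand_ge0 (c : V m n) : ~~ is_sink c -> 0 <= u' c.
Proof.
case: c => [j /park_cand_inl_bounds /andP[] // | i _]; rewrite park_cand_inr.
have [ih | hi] := ltnP i h0; last by have := u_sorted.2 _ _ hi; lia.
by have := u_stable.2 i; have := u_stable.2 h0; lia.
Qed.

Lemma park_cand_b_rotated_sorted :
  sorted <=%R ([seq u' (inr i) | i : 'I_n <- enum 'I_n & (h0 <= i)%N]
               ++ [seq u' (inr i) | i : 'I_n <- enum 'I_n & (i < h0)%N]).
Proof.
have [_ b_stable] := u_stable; have [_ b_sorted] := u_sorted.
apply: sorted_cat_filter_enum_ord => i j; rewrite !park_cand_inr.
- by move=> hi hj /ltnW/b_sorted; rewrite !ltnNge hi hj /=; lia.
- by move=> ih jh /ltnW/b_sorted; rewrite ih jh; lia.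
- by move=> hi jh; rewrite ltnNge hi jh /=; have := b_stable i; have := b_stable j; lia.
Qed.

Lemma park_cand_a_rotated_sorted :
  sorted <=%R ([seq u' (inl j) | j : 'I_m <- enum 'I_m & (k <= j%:Z + 1) && (j%:Z + 1 <= m%:Z - 1)]
               ++ [seq u' (inl j) | j : 'I_m <- enum 'I_m & j%:Z + 1 <= k - 1]).
Proof.
have [a_stable _] := u_stable; have [a_sorted _] := u_sorted.
have nonsink_of (j : 'I_m) : j%:Z + 1 <= m%:Z - 1 -> ~~ @is_sink m n (inl j).
  by rewrite nonsink_inlE; lia.
have head_nonsink (j : 'I_m) : j%:Z + 1 <= k - 1 -> ~~ @is_sink m n (inl j).
  by move=> jk; apply: nonsink_of; have := cnt_a_le u h0%:Z; lia.
apply: sorted_cat_filter_enum_ord => i j.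
- move=> /andP[ki /nonsink_of nsi] /andP[kj /nonsink_of nsj] /ltnW ij.
  by rewrite !park_cand_inl //; have := a_sorted _ _ nsi nsj ij; do 2!case: ifP; lia.
- move=> ik jk /ltnW ij; have nsi := head_nonsink _ ik; have nsj := head_nonsink _ jk.
  by rewrite !park_cand_inl // ik jk; have := a_sorted _ _ nsi nsj ij; lia.
- move=> /andP[ki /nonsink_of nsi] jk; have nsj := head_nonsink _ jk.
  rewrite !park_cand_inl // jk; have := a_stable i nsi; have := a_stable j nsj.
  by case: ifP; lia.
Qed.

Hypotheses (r_max : forall i : 'I_n, rvec u i <= rvec u h0)
           (r_first_max : forall i : 'I_n, (i < h0)%N -> rvec u i < rvec u h0).

Lemma cnt_a_lt : (1 < m)%N -> (cnt_a u h0%:Z < m.-1)%N.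
Proof.
move=> m_gt1; have [h0_eq0 | h0_gt0] := posnP h0.
  by rewrite h0_eq0 cnt_a0 //; lia.
pose b1 : 'I_n := Ordinal (leq_ltn_trans (leq0n h0) (ltn_ord h0)).
have := r_first_max (i := b1) h0_gt0; rewrite /rvec /= cnt_a0 //.
by have := u_stable.2 h0; have := u_stable.2 b1; lia.
Qed.

Section Firing.
(* A and B are the a- and b-parts of a set that can be toppled from u' *)
Variables (A : {set 'I_m}) (B : {set 'I_n}).
Hypotheses (A_nonsink : forall j : 'I_m, j \in A -> ~~ @is_sink m n (inl j))
           (fire_A : forall j : 'I_m, j \in A -> n%:Z - #|B|%:Z <= u' (inl j))
           (fire_B : forall i : 'I_n, i \in B -> m%:Z - #|A|%:Z <= u' (inr i)).

Lemma firing_B0 : B = set0 -> A = set0.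
Proof.
move=> B0; apply/setP => j; rewrite inE; apply/negP => jA.
by have := fire_A jA; have := park_cand_inl_bounds (A_nonsink jA); rewrite B0 cards0; lia.
Qed.

Lemma firing_low : B != set0 -> (forall i, i \in B -> (i < h0)%N) -> False.
Proof.
move=> Bne B_lt; have [i iB room] := exists_mem_card_room Bne B_lt.
have lt_ih := B_lt i iB.
have sub : A \subset a_window u i%:Z h0%:Z.
  apply/subsetP => j jA; have nsj := A_nonsink jA; rewrite inE nsj /=.
  have := fire_A jA; rewrite park_cand_inl_threshold //.
  by have := u_stable.1 j nsj; case: ifP; lia.
have := r_first_max lt_ih; rewrite /rvec (@cnt_a_window _ _ u i%:Z h0%:Z); last by lia.
by have := fire_B iB; rewrite park_cand_inr lt_ih; have := subset_leq_card sub; lia.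
Qed.

Lemma firing_high : B :&: [set i : 'I_n | h0 <= i]%N != set0 -> False.
Proof.
set X := B :&: _ => Xne.
have [i /setIP[iB]] := exists_mem_card_room Xne (fun x _ => ltn_ord x).
rewrite inE => le_hi room.
have BX : (#|B| <= #|X| + h0)%N.
  have sub : B :\: [set i : 'I_n | h0 <= i]%N \subset [pred x : 'I_n | 0 <= x < h0]%N.
    by apply/subsetP => x; rewrite !inE -ltnNge => /andP[].
  rewrite -(cardsID [set i : 'I_n | h0 <= i]%N B) -/X; have := subset_leq_card sub.
  by rewrite card_ord_itv subn0 (minn_idPl (ltnW (ltn_ord h0))) leq_add2l.
have A_out (j : 'I_m) : j \in A -> ~~ (h0%:Z < u (inl j) + 1 <= i%:Z).
  move=> jA; have := fire_A jA; rewrite park_cand_inl_threshold ?A_nonsink //.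
  by case: ifP; lia.
have AW0 : A :&: a_window u h0%:Z i%:Z = set0.
  by apply/setP => j; rewrite !inE; apply/negP => /and3P[/A_out/negP].
have sub : A :|: a_window u h0%:Z i%:Z \subset [set j | ~~ @is_sink m n (inl j)].
  by apply/subsetP => j; rewrite !inE => /orP[/A_nonsink -> | /andP[-> _]].
have := subset_leq_card sub; rewrite cardsU AW0 cards0 subn0 card_nonsink.
have := r_max i; rewrite /rvec (@cnt_a_window _ _ u h0%:Z i%:Z); last by lia.
by have := fire_B iB; rewrite park_cand_inr ltnNge le_hi /=; lia.
Qed.

Lemma firing_trivial : A = set0 /\ B = set0.
Proof.
suff B0 : B = set0 by split; [exact: firing_B0 | ].
apply/eqP/negPn/negP => Bne.
have [X0 | /firing_high //] := eqVneq (B :&: [set i : 'I_n | h0 <= i]%N) set0.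
apply: (firing_low Bne) => i iB; rewrite ltnNge; apply/negP => hi.
by have := in_set0 i; rewrite -X0 !inE iB hi.
Qed.

End Firing.

Lemma park_cand_parking : is_parking u'.
Proof. exact: is_parking_bipartite park_cand_ge0 firing_trivial. Qed.

End ParkCand.

Theorem mainTheorem6 (m n : nat) (u : config m n) (h0 : 'I_n) :
  (0 < m)%N -> (0 < n)%N ->
  stable u -> sorted_config u ->
  (* h = h0 + 1 is the smallest index where the r-vector attains its maximum *)
  (forall i : 'I_n, rvec u i <= rvec u h0) ->
  (forall i : 'I_n, (i < h0)%N -> rvec u i < rvec u h0) ->
  let k := u (inr h0) - rvec u h0 + 2 in
  let u' := park_cand u h0 k in
  [/\ k = 1 + (cnt_a u (h0 : nat)%:Z)%:Z,
      (1 < m)%N -> 1 <= k <= m%:Z - 1,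
      is_parking u' /\ toppling_equiv u u' &
   [/\
      (forall i : 'I_n,
         u' (inr i) = u (inr i) - u (inr h0) + m%:Z * (if (i < h0)%N then 1 else 0)),
      (forall j : 'I_m, ~~ @is_sink m n (inl j) ->
         u' (inl j) = u (inl j) - (h0 : nat)%:Z + n%:Z * (if (j : nat)%:Z + 1 <= k - 1 then 1 else 0)),
      (forall c : V m n, is_sink c ->
         u' c = degree u - \sum_(i : 'I_n) u' (inr i)
                         - \sum_(j : 'I_m | ~~ @is_sink m n (inl j)) u' (inl j)) &
      sorted <=%R ([seq u' (inl j) | j : 'I_m <- enum 'I_m &
                      (k <= (j : nat)%:Z + 1) && ((j : nat)%:Z + 1 <= m%:Z - 1)]
                   ++ [seq u' (inl j) | j : 'I_m <- enum 'I_m & (j : nat)%:Z + 1 <= k - 1])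
      /\ sorted <=%R ([seq u' (inr i) | i : 'I_n <- enum 'I_n & (h0 <= i)%N]
                      ++ [seq u' (inr i) | i : 'I_n <- enum 'I_n & (i < h0)%N])]].
Proof.
move=> m_gt0 _ u_stable u_sorted r_max r_first_max k u'.
have k_cnt : k = 1 + (cnt_a u h0%:Z)%:Z by rewrite /k /rvec; lia.
rewrite {}/u' k_cnt; split=> //.
- by move=> m_gt1; have := cnt_a_lt m_gt0 u_stable r_first_max m_gt1; lia.
- split; [exact: park_cand_parking | exact: toppling_equiv_lapC].
split.
- exact: park_cand_inr.
- exact: park_cand_inl.
- by move=> c /sink_value ->; rewrite degree_park_cand.
- split; [exact: park_cand_a_rotated_sorted | exact: park_cand_b_rotated_sorted].
Qed.
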